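(* Let $(x_j)_{j=1}^N$ and $(f_j)_{j=1}^N$ be frames for $\ell_2^M$ with $\|x_j\|=\|f_j\|$ for all $1\leq j\leq N$. Let $A>0$ be a lower frame bound for either $(x_j)_{j=1}^N$ or $(f_j)_{j=1}^N$. Then for all non-zero scalars $(d_j)_{j=1}^N$, if $B$ is a Bessel bound for both $(d_jx_j)_{j=1}^N$ and $(d_j^{-1}f_j)_{j=1}^N$, then $B\geq A$. In particular, if $(x_j)_{j=1}^N$ and $(f_j)_{j=1}^N$ are both tight frames, then they are both tight with the same frame bound $A>0$, and $$A=\min_{d=(d_j)_{j=1}^N}\max\{B_{dX},B_{d^{-1}F}\},$$ where the minimum is over sequences of non-zero scalars, $B_{dX}$ is the optimal Bessel bound of $(d_jx_j)_{j=1}^N$ and $B_{d^{-1}F}$ is the optimal Bessel bound of $(d_j^{-1}f_j)_{j=1}^N$.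
   Context: A sequence $(y_j)_{j=1}^N$ in $\ell_2^M$ has Bessel bound $B$ if $\sum_j|\langle x,y_j\rangle|^2\leq B\|x\|^2$ for all $x$ (the optimal Bessel bound is the least such $B$); it is a frame with lower frame bound $A>0$ if moreover $A\|x\|^2\leq\sum_j|\langle x,y_j\rangle|^2$ for all $x$; it is tight with frame bound $A$ if $\sum_j|\langle x,y_j\rangle|^2=A\|x\|^2$ for all $x$. *)

(* Scalars: an arbitrary numClosedFieldType C (e.g. algC or
   the complex numbers); l_2^M is represented by row vectors 'rV[C]_M with the
   standard inner product <x,y> = \sum_i x_i * conj(y_i). *)
From HB Require Import structures.
From mathcomp Require Import all_boot all_order all_algebra.
Set Implicit Arguments. Unset Strict Implicit. Unset Printing Implicit Defensive.
Import Order.TTheory GRing.Theory Num.Theory.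
Local Open Scope ring_scope.

Section FrameDefs.
Variable C : numClosedFieldType.

Definition dotp (M : nat) (x y : 'rV[C]_M) : C := \sum_(i < M) x 0 i * (y 0 i)^*.

Definition vnorm (M : nat) (x : 'rV[C]_M) : C := sqrtC (\sum_(i < M) `|x 0 i| ^+ 2).

Definition frame_sum (M N : nat) (y : 'I_N -> 'rV[C]_M) (x : 'rV[C]_M) : C :=
  \sum_(j < N) `|dotp x (y j)| ^+ 2.

Definition bessel_bound (M N : nat) (y : 'I_N -> 'rV[C]_M) (B : C) : Prop :=
  forall x : 'rV[C]_M, frame_sum y x <= B * vnorm x ^+ 2.

Definition optimal_bessel_bound (M N : nat) (y : 'I_N -> 'rV[C]_M) (B : C) : Prop :=
  bessel_bound y B /\ forall B', bessel_bound y B' -> B <= B'.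

Definition lower_frame_bound (M N : nat) (y : 'I_N -> 'rV[C]_M) (A : C) : Prop :=
  0 < A /\ forall x : 'rV[C]_M, A * vnorm x ^+ 2 <= frame_sum y x.

Definition is_frame (M N : nat) (y : 'I_N -> 'rV[C]_M) : Prop :=
  exists A B, lower_frame_bound y A /\ bessel_bound y B.

Definition tight_frame (M N : nat) (y : 'I_N -> 'rV[C]_M) (A : C) : Prop :=
  0 < A /\ forall x : 'rV[C]_M, frame_sum y x = A * vnorm x ^+ 2.

Definition scale_seq (M N : nat) (d : 'I_N -> C) (y : 'I_N -> 'rV[C]_M) : 'I_N -> 'rV[C]_M :=
  fun j => d j *: y j.

Definition invscale_seq (M N : nat) (d : 'I_N -> C) (y : 'I_N -> 'rV[C]_M) : 'I_N -> 'rV[C]_M :=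
  fun j => (d j)^-1 *: y j.

End FrameDefs.

(* Summing the frame inequalities over an orthonormal basis (e_i) turns each
   frame bound into a bound on the trace sum_j ||y_j||^2 of the frame operator:
   a lower bound A gives A M <= sum_j ||y_j||^2 and a Bessel bound B gives
   sum_j ||y_j||^2 <= B M.  Since |d|^2 + |d|^-2 >= 2 and ||x_j|| = ||f_j||,
   the traces of (d_j x_j) and (d_j^-1 f_j) add up to at least 2 sum_j ||x_j||^2,
   whence 2 A M <= 2 B M.  For tight frames the trace determines the bound, so
   X and F share it, and d = 1 attains it. *)
From HB Require Import structures.
From mathcomp Require Import all_boot all_order all_algebra.
From mathcomp Require Import ring.
Import Order.TTheory GRing.Theory Num.Theory.
Set Implicit Arguments.
Unset Strict Implicit.
Local Open Scope ring_scope.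

Lemma two_le_addrV (R : numFieldType) (a : R) : 0 < a -> 2 <= a + a^-1.
Proof.
move=> a_gt0; rewrite -subr_ge0.
have -> : a + a^-1 - 2 = (a - 1) ^+ 2 / a by field; rewrite gt_eqF.
apply: divr_ge0 (ltW a_gt0).
by rewrite -realEsqr rpredB ?gtr0_real.
Qed.

Section FrameTrace.
Variables (C : numClosedFieldType) (M N : nat).
Implicit Types (x : 'rV[C]_M) (y : 'I_N -> 'rV[C]_M).

Lemma vnorm_sqr x : vnorm x ^+ 2 = \sum_i `|x 0 i| ^+ 2.
Proof. by rewrite /vnorm sqrtCK. Qed.

Lemma vnorm_sqr_ge0 x : 0 <= vnorm x ^+ 2.
Proof. by rewrite vnorm_sqr sumr_ge0 // => i _; rewrite exprn_ge0. Qed.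

Lemma vnormZ_sqr (a : C) x : vnorm (a *: x) ^+ 2 = `|a| ^+ 2 * vnorm x ^+ 2.
Proof.
by rewrite !vnorm_sqr mulr_sumr; apply: eq_bigr => i _; rewrite mxE normrM exprMn.
Qed.

Lemma dotp_delta_mxl i x : dotp (delta_mx 0 i) x = (x 0 i)^*.
Proof.
rewrite /dotp (bigD1 i) //= mxE !eqxx mul1r big1 ?addr0 // => k /negbTE neq_ki.
by rewrite mxE neq_ki andbF mul0r.
Qed.

Lemma vnorm_delta_mx i : vnorm (delta_mx 0 i : 'rV[C]_M) ^+ 2 = 1.
Proof.
rewrite vnorm_sqr (bigD1 i) //= mxE !eqxx normr1 expr1n big1 ?addr0 //.
by move=> k /negbTE neq_ki; rewrite mxE neq_ki andbF normr0 expr0n.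
Qed.

Lemma frame_sum_ge0 y x : 0 <= frame_sum y x.
Proof. by apply: sumr_ge0 => j _; rewrite exprn_ge0. Qed.

Lemma eq_frame_sum y y' : y =1 y' -> frame_sum y =1 frame_sum y'.
Proof. by move=> eq_y x; apply: eq_bigr => j _; rewrite eq_y. Qed.

Lemma eq_tight_frame y y' A : y =1 y' -> tight_frame y A -> tight_frame y' A.
Proof. by move=> eq_y [A_gt0 tight_y]; split=> // x; rewrite -(eq_frame_sum eq_y). Qed.

Lemma scale_seq1 y : y =1 scale_seq (fun=> 1) y.
Proof. by move=> j; rewrite /scale_seq scale1r. Qed.

Lemma invscale_seq1 y : y =1 invscale_seq (fun=> 1) y.
Proof. by move=> j; rewrite /invscale_seq invr1 scale1r. Qed.

Lemma tight_frame_lower y A : tight_frame y A -> lower_frame_bound y A.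
Proof. by move=> [A_gt0 tight_y]; split=> // x; rewrite tight_y. Qed.

Lemma bessel_boundW y B B' : B <= B' -> bessel_bound y B -> bessel_bound y B'.
Proof.
by move=> le_BB' bessel_y x; rewrite (le_trans (bessel_y x)) ?ler_wpM2r ?vnorm_sqr_ge0.
Qed.

Lemma bessel_bound_ge0 y B : (0 < M)%N -> bessel_bound y B -> 0 <= B.
Proof.
move=> M_gt0 /(_ (delta_mx 0 (Ordinal M_gt0))).
by rewrite vnorm_delta_mx mulr1; apply: le_trans; apply: frame_sum_ge0.
Qed.

Lemma tight_frame_optimal y A :
  (0 < M)%N -> tight_frame y A -> optimal_bessel_bound y A.
Proof.
move=> M_gt0 [_ tight_y]; split=> [x|B bessel_y]; first by rewrite tight_y.
by have := bessel_y (delta_mx 0 (Ordinal M_gt0)); rewrite tight_y vnorm_delta_mx !mulr1.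
Qed.

Definition frame_trace y : C := \sum_j vnorm (y j) ^+ 2.

Lemma frame_traceE y : frame_trace y = \sum_(i < M) frame_sum y (delta_mx 0 i).
Proof.
rewrite /frame_trace /frame_sum exchange_big; apply: eq_bigr => j _.
by rewrite vnorm_sqr; apply: eq_bigr => i _; rewrite dotp_delta_mxl norm_conjC.
Qed.

Lemma bessel_bound_frame_trace y B : bessel_bound y B -> frame_trace y <= B *+ M.
Proof.
move=> bessel_y; rewrite frame_traceE -[M in B *+ M]card_ord -sumr_const.
by apply: ler_sum => i _; have := bessel_y (delta_mx 0 i); rewrite vnorm_delta_mx mulr1.
Qed.

Lemma lower_frame_bound_frame_trace y A : lower_frame_bound y A -> A *+ M <= frame_trace y.
Proof.
move=> [_ lower_y]; rewrite frame_traceE -[M in A *+ M]card_ord -sumr_const.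
by apply: ler_sum => i _; have := lower_y (delta_mx 0 i); rewrite vnorm_delta_mx mulr1.
Qed.

Lemma tight_frame_trace y A : tight_frame y A -> frame_trace y = A *+ M.
Proof.
move=> [_ tight_y]; rewrite frame_traceE -[M in A *+ M]card_ord -sumr_const.
by apply: eq_bigr => i _; rewrite tight_y vnorm_delta_mx mulr1.
Qed.

Lemma eq_frame_trace y y' :
  (forall j, vnorm (y j) = vnorm (y' j)) -> frame_trace y = frame_trace y'.
Proof. by move=> eq_norm; apply: eq_bigr => j _; rewrite eq_norm. Qed.

Lemma frame_trace_rescale (X F : 'I_N -> 'rV[C]_M) (d : 'I_N -> C) :
  (forall j, vnorm (X j) = vnorm (F j)) -> (forall j, d j != 0) ->
  frame_trace X *+ 2 <= frame_trace (scale_seq d X) + frame_trace (invscale_seq d F).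
Proof.
move=> eq_norm d_neq0; rewrite -sumrMnl -big_split /=; apply: ler_sum => j _.
rewrite !vnormZ_sqr -eq_norm normfV exprVn -mulrDl -mulr_natl.
by rewrite ler_wpM2r ?vnorm_sqr_ge0 ?two_le_addrV ?exprn_gt0 ?normr_gt0.
Qed.

Lemma frame_trace_le_rescaled_bessel (X F : 'I_N -> 'rV[C]_M) d A B1 B2 :
  (0 < M)%N -> (forall j, vnorm (X j) = vnorm (F j)) -> (forall j, d j != 0) ->
  A *+ M <= frame_trace X ->
  bessel_bound (scale_seq d X) B1 -> bessel_bound (invscale_seq d F) B2 ->
  A *+ 2 <= B1 + B2.
Proof.
move=> M_gt0 eq_norm d_neq0 A_le_trace bessel_dX bessel_dF.
suff : A *+ 2 *+ M <= (B1 + B2) *+ M by rewrite lerMn2r gtn_eqF.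
rewrite mulrnAC [X in _ <= X]mulrnDl.
apply: le_trans (lerD (bessel_bound_frame_trace bessel_dX)
                      (bessel_bound_frame_trace bessel_dF)).
by apply: le_trans (frame_trace_rescale eq_norm d_neq0); rewrite lerMn2r.
Qed.

Lemma lower_frame_bound_le_rescaled_bessel (X F : 'I_N -> 'rV[C]_M) d A B :
  (0 < M)%N -> (forall j, vnorm (X j) = vnorm (F j)) ->
  lower_frame_bound X A \/ lower_frame_bound F A -> (forall j, d j != 0) ->
  bessel_bound (scale_seq d X) B -> bessel_bound (invscale_seq d F) B -> A <= B.
Proof.
move=> M_gt0 eq_norm lower_XF d_neq0 bessel_dX bessel_dF.
suff : A *+ 2 <= B *+ 2 by rewrite lerMn2r.
apply: (frame_trace_le_rescaled_bessel M_gt0 eq_norm d_neq0 _ bessel_dX bessel_dF).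
by case: lower_XF => /lower_frame_bound_frame_trace //; rewrite (eq_frame_trace eq_norm).
Qed.

Lemma tight_frame_bound_unique (X F : 'I_N -> 'rV[C]_M) A A' :
  (0 < M)%N -> (forall j, vnorm (X j) = vnorm (F j)) ->
  tight_frame X A -> tight_frame F A' -> A' = A.
Proof.
move=> M_gt0 eq_norm tight_X tight_F.
apply/eqP; suff : A' *+ M == A *+ M by rewrite eqrMn2r gtn_eqF.
rewrite -(tight_frame_trace tight_X) -(tight_frame_trace tight_F).
by rewrite (eq_frame_trace eq_norm).
Qed.

End FrameTrace.

Theorem proposition4p2 (C : numClosedFieldType) (M N : nat)
    (X F : 'I_N -> 'rV[C]_M) :
  (0 < M)%N ->
  is_frame X -> is_frame F ->
  (forall j, vnorm (X j) = vnorm (F j)) ->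
  (forall (A : C) (d : 'I_N -> C) (B : C),
      (lower_frame_bound X A \/ lower_frame_bound F A) ->
      (forall j, d j != 0) ->
      bessel_bound (scale_seq d X) B ->
      bessel_bound (invscale_seq d F) B ->
      A <= B)
  /\
  ((exists AX, tight_frame X AX) -> (exists AF, tight_frame F AF) ->
   exists A : C,
     0 < A /\ tight_frame X A /\ tight_frame F A /\
     (* A is attained by max{B_dX, B_{d^-1}F} for some nonzero d ... *)
     (exists (d : 'I_N -> C) (BX BF : C),
         (forall j, d j != 0) /\
         optimal_bessel_bound (scale_seq d X) BX /\
         optimal_bessel_bound (invscale_seq d F) BF /\
         Num.max BX BF = A) /\
     (* ... and is a lower bound for all such values *)
     (forall (d : 'I_N -> C) (BX BF : C),
         (forall j, d j != 0) ->
         optimal_bessel_bound (scale_seq d X) BX ->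
         optimal_bessel_bound (invscale_seq d F) BF ->
         A <= Num.max BX BF)).
Proof.
move=> M_gt0 _ _ eq_norm.
split=> [A d B|[A tight_X] [AF tight_F]].
  exact: lower_frame_bound_le_rescaled_bessel.
have eq_AF := tight_frame_bound_unique M_gt0 eq_norm tight_X tight_F; subst AF.
exists A; split; first by case: tight_X.
do 2![split=> //]; split.
  exists (fun=> 1), A, A; split=> [j|]; first exact: oner_neq0.
  split; first by apply: tight_frame_optimal (eq_tight_frame (scale_seq1 X) tight_X).
  split; last exact: maxxx.
  by apply: tight_frame_optimal (eq_tight_frame (invscale_seq1 F) tight_F).
move=> d BX BF d_neq0 [bessel_dX _] [bessel_dF _].
have cmp_BXF : BX >=< BF.
  by apply: real_comparable; apply: ger0_real; apply: bessel_bound_ge0 M_gt0 _.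
apply: (lower_frame_bound_le_rescaled_bessel M_gt0 eq_norm _ d_neq0).
- by left; apply: tight_frame_lower.
- by apply: bessel_boundW bessel_dX; rewrite comparable_le_max // lexx.
- by apply: bessel_boundW bessel_dF; rewrite comparable_le_max // lexx orbT.
Qed.
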